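(* Let $A,B$ be idempotent torsion-free $\Gamma$-graded rings and let $F:A\text{-gr}\to B\text{-gr}$, $G:B\text{-gr}\to A\text{-gr}$ be inverse graded category equivalences. If $S\in A\text{-gr}$ is graded simple (resp. graded semisimple), then $F(S)$ is graded simple (resp. graded semisimple) in $B\text{-gr}$.
   Context: $\Gamma$ is a fixed multiplicative group. Rings are associative $\Gamma$-graded, not necessarily unital; $A$ is idempotent if $A^2=A$ and torsion-free if $Aa=0\Rightarrow a=0$ and $aA=0\Rightarrow a=0$. $A\text{-gr}$: unital ($AM=M$), torsion-free ($Am=0\Rightarrow m=0$) graded left $A$-modules with degree-preserving maps. A graded functor is an additive functor commuting with suspensions ($M(\sigma)_\tau=M_{\tau\sigma}$); a graded category equivalence is a graded functor which is an equivalence. A graded module $S\neq0$ is graded simple if its only graded submodules are $0$ and $S$; it is graded semisimple if it is a direct sum of graded simple modules. *)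

From HB Require Import structures.
From mathcomp Require Import all_boot all_algebra.
From Stdlib Require List.
Set Implicit Arguments. Unset Strict Implicit. Unset Printing Implicit Defensive.
Import GRing.Theory.
Local Open Scope ring_scope.

Record group := Group {
  gcar :> Type;
  gmul : gcar -> gcar -> gcar;
  gone : gcar;
  ginv : gcar -> gcar;
  gmulA : forall x y z, gmul x (gmul y z) = gmul (gmul x y) z;
  gmul1g : forall x, gmul gone x = x;
  gmulg1 : forall x, gmul x gone = x;
  gmulVg : forall x, gmul (ginv x) x = gone;
  gmulgV : forall x, gmul x (ginv x) = gone }.

(* pi g is the projection onto the degree-g component; the conditions say
   V = (+)_g V_g with V_g = image of pi g (orthogonal idempotent additive
   projections whose images span V). *)
Definition grading (Γ : group) (V : zmodType) (pi : Γ -> V -> V) : Prop :=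
  [/\ forall g x y, pi g (x + y) = pi g x + pi g y,
      forall g x, pi g (pi g x) = pi g x,
      forall g h x, g <> h -> pi g (pi h x) = 0 &
      forall x, exists s : seq Γ, x = \sum_(g <- s) pi g x].

Record gring (Γ : group) := GRingR {
  rcar :> zmodType;
  rmul : rcar -> rcar -> rcar;
  rpi : Γ -> rcar -> rcar;
  rmulDl : forall x y z, rmul (x + y) z = rmul x z + rmul y z;
  rmulDr : forall x y z, rmul x (y + z) = rmul x y + rmul x z;
  rmulA : forall x y z, rmul x (rmul y z) = rmul (rmul x y) z;
  rgrading : grading rpi;
  rmul_hom : forall g h x y,
    rpi (gmul g h) (rmul (rpi g x) (rpi h y)) = rmul (rpi g x) (rpi h y) }.

Definition idempotent_ring Γ (A : gring Γ) : Prop :=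
  forall a : A, exists s : seq (A * A), a = \sum_(p <- s) rmul p.1 p.2.

Definition torsionfree_ring Γ (A : gring Γ) : Prop :=
  (forall a : A, (forall b : A, rmul b a = 0) -> a = 0) /\
  (forall a : A, (forall b : A, rmul a b = 0) -> a = 0).

(* Objects of A-gr: unital, torsion-free graded left A-modules. *)
Record gmod Γ (A : gring Γ) := GMod {
  mcar :> zmodType;
  act : A -> mcar -> mcar;
  mpi : Γ -> mcar -> mcar;
  actDl : forall a b m, act (a + b) m = act a m + act b m;
  actDr : forall a m n, act a (m + n) = act a m + act a n;
  actA : forall a b m, act (rmul a b) m = act a (act b m);
  mgrading : grading mpi;
  act_hom : forall g h a m,
    mpi (gmul g h) (act (@rpi Γ A g a) (mpi h m)) = act (@rpi Γ A g a) (mpi h m);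
  munital : forall m, exists s : seq (A * mcar), m = \sum_(p <- s) act p.1 p.2;
  mtorsionfree : forall m, (forall a, act a m = 0) -> m = 0 }.

Record ghom Γ (A : gring Γ) (M N : gmod A) := GHom {
  hfun :> M -> N;
  hfunD : forall x y, hfun (x + y) = hfun x + hfun y;
  hfunA : forall a x, hfun (act a x) = act a (hfun x);
  hfunP : forall g x, hfun (mpi g x) = mpi g (hfun x) }.

Section Homs.
Variables (Γ : group) (A : gring Γ).

Lemma mpiD (M : gmod A) g (x y : M) : mpi g (x + y) = mpi g x + mpi g y.
Proof. by case: (mgrading M) => H _ _ _; apply: H. Qed.

Definition hid (M : gmod A) : ghom M M :=
  @GHom Γ A M M (fun x => x) (fun _ _ => erefl) (fun _ _ => erefl) (fun _ _ => erefl).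

Definition hcomp (M N P : gmod A) (g : ghom N P) (f : ghom M N) : ghom M P.
Proof.
refine (@GHom Γ A M P (fun x => g (f x)) _ _ _).
- by move=> x y; rewrite !hfunD.
- by move=> a x; rewrite !hfunA.
- by move=> h x; rewrite !hfunP.
Defined.

Definition hplus (M N : gmod A) (f g : ghom M N) : ghom M N.
Proof.
refine (@GHom Γ A M N (fun x => f x + g x) _ _ _).
- by move=> x y; rewrite !hfunD addrACA.
- by move=> a x; rewrite !hfunA actDr.
- by move=> h x; rewrite !hfunP mpiD.
Defined.

Definition is_iso (M N : gmod A) (f : ghom M N) : Prop :=
  exists g : ghom N M, hcomp g f = hid M /\ hcomp f g = hid N.

(* Suspension M(sigma): M(sigma)_tau = M_(tau sigma). *)
Lemma shift_grading (M : gmod A) (s : Γ) :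
  grading (fun t => @mpi Γ A M (gmul t s)).
Proof.
case: (mgrading M) => H1 H2 H3 H4; split.
- by move=> g x y; apply: H1.
- by move=> g x; apply: H2.
- move=> g h x gh; apply: H3 => E; apply: gh.
  by rewrite -(gmulg1 g) -(gmulgV s) gmulA E -gmulA gmulgV gmulg1.
- move=> x; case: (H4 x) => l Hl; exists (map (fun g => gmul g (ginv s)) l).
  by rewrite big_map; under eq_bigr => g _ do rewrite -gmulA gmulVg gmulg1.
Qed.

Lemma shift_act_hom (M : gmod A) (s : Γ) g h a (m : M) :
  mpi (gmul (gmul g h) s) (act (@rpi Γ A g a) (mpi (gmul h s) m))
  = act (@rpi Γ A g a) (mpi (gmul h s) m).
Proof. by rewrite -gmulA act_hom. Qed.

Definition shift (s : Γ) (M : gmod A) : gmod A :=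
  @GMod Γ A M (@act Γ A M) (fun t => mpi (gmul t s))
    (@actDl Γ A M) (@actDr Γ A M) (@actA Γ A M) (shift_grading M s)
    (@shift_act_hom M s) (@munital Γ A M) (@mtorsionfree Γ A M).

Definition shift_hom (s : Γ) (M N : gmod A) (f : ghom M N) :
  ghom (shift s M) (shift s N) :=
  @GHom Γ A (shift s M) (shift s N) f (@hfunD Γ A M N f) (@hfunA Γ A M N f)
    (fun t x => @hfunP Γ A M N f (gmul t s) x).

End Homs.

Record gfunctor Γ (A B : gring Γ) := GFunctor {
  fobj :> gmod A -> gmod B;
  fhom : forall M N : gmod A, ghom M N -> ghom (fobj M) (fobj N);
  fhom_id : forall M, fhom (hid M) = hid (fobj M);
  fhom_comp : forall (M N P : gmod A) (g : ghom N P) (f : ghom M N),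
    fhom (hcomp g f) = hcomp (fhom g) (fhom f);
  fhom_add : forall (M N : gmod A) (f g : ghom M N),
    fhom (hplus f g) = hplus (fhom f) (fhom g) }.

Definition graded_functor Γ (A B : gring Γ) (F : gfunctor A B) : Prop :=
  forall s : Γ, exists eta : forall M : gmod A, ghom (F (shift s M)) (shift s (F M)),
    (forall M, is_iso (eta M)) /\
    (forall (M N : gmod A) (f : ghom M N),
       hcomp (eta N) (fhom F (shift_hom s f)) = hcomp (shift_hom s (fhom F f)) (eta M)).

Definition comp_iso_id Γ (A B : gring Γ) (F : gfunctor A B) (G : gfunctor B A) : Prop :=
  exists eta : forall M : gmod A, ghom (G (F M)) M,
    (forall M, is_iso (eta M)) /\
    (forall (M N : gmod A) (f : ghom M N),
       hcomp (eta N) (fhom G (fhom F f)) = hcomp f (eta M)).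

Definition inverse_equivalences Γ (A B : gring Γ) (F : gfunctor A B) (G : gfunctor B A) :=
  comp_iso_id F G /\ comp_iso_id G F.

Definition gr_submod Γ (A : gring Γ) (M : gmod A) (P : M -> Prop) : Prop :=
  [/\ P 0, forall x y, P x -> P y -> P (x + y), forall x, P x -> P (- x),
      forall a x, P x -> P (act a x) & forall g x, P x -> P (mpi g x)].

Definition gr_simple_sub Γ (A : gring Γ) (M : gmod A) (N : M -> Prop) : Prop :=
  (exists x, N x /\ x <> 0) /\
  (forall P, gr_submod P -> (forall x, P x -> N x) ->
     (forall x, P x -> x = 0) \/ (forall x, N x -> P x)).

Definition gr_simple Γ (A : gring Γ) (M : gmod A) : Prop :=
  gr_simple_sub (fun _ : M => True).

Definition gr_semisimple Γ (A : gring Γ) (M : gmod A) : Prop :=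
  exists (I : Type) (N : I -> M -> Prop),
    (forall i, gr_submod (N i) /\ gr_simple_sub (N i)) /\
    (forall x : M, exists s : seq (I * M),
        List.Forall (fun p => N p.1 p.2) s /\ x = \sum_(p <- s) p.2) /\
    (forall i (x : M), N i x ->
       (exists s : seq (I * M),
          List.Forall (fun p => p.1 <> i /\ N p.1 p.2) s /\ x = \sum_(p <- s) p.2) ->
       x = 0).

(* A graded submodule P of an object M of A-gr need not be unital, so it is not
   itself an object of A-gr.  The A-span [hspan P] of the homogeneous elements
   of P is one (A is idempotent): it lies in P, is nonzero when P is (M is
   torsion-free), and contains the image of every morphism of A-gr into P.
   Graded submodules can therefore be probed by monomorphisms.  Mutually
   inverse additive equivalences reflect zero maps, preserve monomorphisms
   (the kernel of [fhom F f] is probed by its homogeneous span), and induce an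
   inclusion-preserving bijection between images of monomorphisms into S and
   into F S.  Simplicity of a submodule, and the spanning and independence
   conditions of a semisimple decomposition, only involve this ordered set of
   images, so they transfer from S to F S. *)

From HB Require Import structures.
From mathcomp Require Import all_boot all_algebra boolp.
(* Imported last, since generic_quotient (in all_boot) also defines [mpi]. *)
Set Implicit Arguments. Unset Strict Implicit. Unset Printing Implicit Defensive.
Import GRing.Theory.
Local Open Scope ring_scope.

Lemma morph_add0 (U V : zmodType) (f : U -> V) : {morph f : x y / x + y} -> f 0 = 0.
Proof. by move=> fD; apply: (@addrI _ (f 0)); rewrite -fD !addr0. Qed.

Section Modules.
Variables (Γ : group) (A : gring Γ).
Implicit Types M N X Y : gmod A.

HB.instance Definition _ M (a : A) :=
  GRing.isNmodMorphism.Build M M (act a) (morph_add0 (@actDr _ _ M a), @actDr _ _ M a).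
HB.instance Definition _ M (g : Γ) :=
  GRing.isNmodMorphism.Build M M (mpi g) (morph_add0 (@mpiD _ _ M g), @mpiD _ _ M g).
HB.instance Definition _ M N (f : ghom M N) :=
  GRing.isNmodMorphism.Build M N f (morph_add0 (hfunD f), hfunD f).

Lemma act0l M (m : M) : act 0 m = 0.
Proof. exact: morph_add0 (fun a b => actDl a b m). Qed.

Lemma actNl M a (m : M) : act (- a) m = - act a m.
Proof. by apply/eqP; rewrite -addr_eq0 -actDl addNr act0l. Qed.

Lemma act_suml M (m : M) I (s : seq I) (f : I -> A) :
  act (\sum_(i <- s) f i) m = \sum_(i <- s) act (f i) m.
Proof. by elim: s => [|i s IHs]; rewrite ?big_nil ?act0l // !big_cons actDl IHs. Qed.

Lemma mpi_id M g (x : M) : mpi g (mpi g x) = mpi g x.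
Proof. by case: (mgrading M) => _ + _ _; apply. Qed.

Lemma mpi_orth M g h (x : M) : g <> h -> mpi g (mpi h x) = 0.
Proof. by case: (mgrading M) => _ _ + _; apply. Qed.

Lemma mpi_decomp M (x : M) : exists s : seq Γ, x = \sum_(g <- s) mpi g x.
Proof. by case: (mgrading M) => _ _ _; apply. Qed.

Lemma rpi_decomp (a : A) : exists s : seq Γ, a = \sum_(g <- s) rpi g a.
Proof. by case: (rgrading A) => _ _ _; apply. Qed.

Lemma ghom_ext M N (f g : ghom M N) : f =1 g -> f = g.
Proof.
case: f g => [f fD fA fP] [g gD gA gP] /= /funext fg; subst g.
by congr GHom; apply: Prop_irrelevance.
Qed.

Definition im X M (f : ghom X M) (y : M) : Prop := exists x, f x = y.

Definition im_le X Y M (f : ghom X M) (g : ghom Y M) : Prop :=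
  forall y, im f y -> im g y.

Lemma im_submod X M (f : ghom X M) : gr_submod (im f).
Proof.
split.
- by exists 0; rewrite raddf0.
- by move=> _ _ [x <-] [y <-]; exists (x + y); rewrite raddfD.
- by move=> _ [x <-]; exists (- x); rewrite raddfN.
- by move=> a _ [x <-]; exists (act a x); rewrite hfunA.
- by move=> g _ [x <-]; exists (mpi g x); rewrite hfunP.
Qed.

Lemma im_hid M : im (hid M) = fun _ => True.
Proof. by apply/funext => y; apply/propext; split=> // _; exists y. Qed.

Lemma factor_through X Y M (f : ghom X M) (g : ghom Y M) :
  injective g -> im_le f g -> exists k : ghom X Y, f = hcomp g k.
Proof.
move=> g_inj fg.
have kP x : {y | g y = f x} by apply/cid/fg; exists x.
pose k x := sval (kP x).
have kE x : g (k x) = f x := svalP (kP x).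
have kD x y : k (x + y) = k x + k y.
  by apply: g_inj; rewrite hfunD !kE hfunD.
have kA a x : k (act a x) = act a (k x) by apply: g_inj; rewrite hfunA !kE hfunA.
have kM h x : k (mpi h x) = mpi h (k x) by apply: g_inj; rewrite hfunP !kE hfunP.
by exists (GHom kD kA kM); apply: ghom_ext => x /=; rewrite kE.
Qed.

Lemma ker_submod M N (f : ghom M N) : gr_submod (fun x => f x = 0).
Proof.
split=> [|x y fx fy|x fx|a x fx|g x fx]; first exact: raddf0.
- by rewrite hfunD fx fy addr0.
- by rewrite raddfN /= fx oppr0.
- by rewrite hfunA fx raddf0.
- by rewrite hfunP fx raddf0.
Qed.

Lemma gr_submodI M (P Q : M -> Prop) :
  gr_submod P -> gr_submod Q -> gr_submod (fun x => P x /\ Q x).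
Proof.
case=> P0 PD PN PA PM [Q0 QD QN QA QM].
split=> [//|x y [? ?] [? ?]|x [? ?]|a x [? ?]|g x [? ?]]; split; auto.
Qed.

Section SumOfSubmodules.
Variables (M : gmod A) (I : Type) (N : I -> M -> Prop).

Definition sum_submods (y : M) : Prop :=
  exists s : seq (I * M), List.Forall (fun p => N p.1 p.2) s /\ y = \sum_(p <- s) p.2.

Lemma sum_submods_in i y : N i y -> sum_submods y.
Proof. by move=> Ny; exists [:: (i, y)]; rewrite big_seq1; split=> //; constructor. Qed.

Lemma sum_submods_min (P : M -> Prop) : gr_submod P ->
  (forall i y, N i y -> P y) -> forall y, sum_submods y -> P y.
Proof.
case=> P0 PD _ _ _ NP _ [s [Ns ->]].
by elim: Ns => [|p t Np _ IH]; rewrite ?big_nil ?big_cons //; apply: PD (NP _ _ Np) IH.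
Qed.

Lemma sum_submodsD x y : sum_submods x -> sum_submods y -> sum_submods (x + y).
Proof.
move=> [s [Ns ->]] [t [Nt ->]]; exists (s ++ t); rewrite big_cat; split=> //.
by elim: Ns => //= p s' Np _ IH; constructor.
Qed.

Lemma sum_submods_map (φ : M -> M) : φ 0 = 0 -> {morph φ : x y / x + y} ->
  (forall i y, N i y -> N i (φ y)) -> forall y, sum_submods y -> sum_submods (φ y).
Proof.
move=> φ0 φD Nφ _ [s [Ns ->]]; exists [seq (p.1, φ p.2) | p <- s].
rewrite big_map (big_morph φ φD φ0); split=> //.
by elim: Ns => //= p t Np _ IH; constructor=> //; apply: Nφ.
Qed.

(* Only nonempty members need to be submodules, so that restricted families
   such as [fun j z => j <> i /\ N j z] are covered. *)
Lemma sum_submods_submod :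
  (forall i y, N i y -> gr_submod (N i)) -> gr_submod sum_submods.
Proof.
move=> N_submod; split=> [|x y|x|a x|g x].
- by exists [::]; rewrite big_nil.
- exact: sum_submodsD.
- apply: sum_submods_map (oppr0 _) (@opprD _) _ x => i y Ny.
  by case: (N_submod i y Ny) => _ _ + _ _; apply.
- apply: sum_submods_map (raddf0 _) (raddfD _) _ x => i y Ny.
  by case: (N_submod i y Ny) => _ _ _ + _; apply.
- apply: sum_submods_map (raddf0 _) (raddfD _) _ x => i y Ny.
  by case: (N_submod i y Ny) => _ _ _ _; apply.
Qed.

End SumOfSubmodules.

End Modules.

Section HomogeneousSpan.
Variables (Γ : group) (A : gring Γ) (M : gmod A) (P : M -> Prop).

Inductive hspan : M -> Prop :=
  | hspan0 : hspan 0
  | hspanD x y : hspan x -> hspan y -> hspan (x + y)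
  | hspan_gen a m k : P m -> mpi k m = m -> hspan (act a m).

Lemma hspanN x : hspan x -> hspan (- x).
Proof.
elim=> [|u v _ hu _ hv|a m k Pm mk]; first by rewrite oppr0; apply: hspan0.
  by rewrite opprD; apply: hspanD.
by rewrite -actNl; apply: hspan_gen Pm mk.
Qed.

Lemma hspan_act b x : hspan x -> hspan (act b x).
Proof.
elim=> [|u v _ hu _ hv|a m k Pm mk]; first by rewrite raddf0; apply: hspan0.
  by rewrite raddfD; apply: hspanD.
by rewrite -actA; apply: hspan_gen Pm mk.
Qed.

Lemma hspan_sum I (s : seq I) (f : I -> M) :
  (forall i, hspan (f i)) -> hspan (\sum_(i <- s) f i).
Proof. by move=> hf; apply: big_ind => //; [apply: hspan0 | apply: hspanD]. Qed.

Lemma hspan_mpi g x : hspan x -> hspan (mpi g x).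
Proof.
elim=> [|u v _ hu _ hv|a m k Pm mk]; first by rewrite raddf0; apply: hspan0.
  by rewrite raddfD; apply: hspanD.
have [s ->] := rpi_decomp a; rewrite act_suml raddf_sum /=; apply: hspan_sum => h.
rewrite -mk -act_hom; have [->|gh] := pselect (g = gmul h k).
  by rewrite mpi_id act_hom mk; apply: hspan_gen Pm mk.
by rewrite mpi_orth //; apply: hspan0.
Qed.

Lemma hspan_submod : gr_submod hspan.
Proof.
split; [exact: hspan0 | exact: hspanD | exact: hspanN | exact: hspan_act |].
exact: hspan_mpi.
Qed.

Lemma hspan_sub : gr_submod P -> forall x, hspan x -> P x.
Proof.
case=> P0 PD _ PA _ x; elim=> // [u v _ Pu _ Pv|a m k Pm _]; first exact: PD.
exact: PA.
Qed.

Lemma hspan_nonzero : gr_submod P ->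
  forall x, P x -> x <> 0 -> exists y, hspan y /\ y <> 0.
Proof.
case=> _ _ _ _ PM x Px x0.
have [k xk0] : exists k, mpi k x <> 0.
  apply/existsNP => xk0; apply: x0; have [s ->] := mpi_decomp x.
  by rewrite big1 // => g _; apply: contrapT.
have [a axk0] : exists a, act a (mpi k x) <> 0.
  by apply/existsNP => axk0; apply: xk0; apply: mtorsionfree => a; apply: contrapT.
by exists (act a (mpi k x)); split=> //; apply: hspan_gen (PM _ _ Px) (mpi_id _ _).
Qed.

Lemma im_sub_hspan X (f : ghom X M) : gr_submod P ->
  (forall y, im f y -> P y) -> forall y, im f y -> hspan y.
Proof.
case=> _ _ _ _ PM fP _ [x <-]; have [s ->] := munital x.
rewrite raddf_sum /=; apply: hspan_sum => -[a z] /=; rewrite hfunA.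
have [t ->] := mpi_decomp z; rewrite !raddf_sum /=; apply: hspan_sum => g.
by rewrite hfunP; apply: hspan_gen (mpi_id _ _); apply/PM/fP; exists z.
Qed.

Lemma hspan_simple : gr_submod P -> gr_simple_sub P -> hspan = P.
Proof.
move=> P_submod [[x [Px x0]] P_max]; apply/funext => y; apply/propext.
split; first exact: hspan_sub.
have [z [hz z0]] := hspan_nonzero P_submod Px x0.
case: (P_max _ hspan_submod (hspan_sub P_submod)) => [hspan_eq0|P_le]; last exact: P_le.
by case: z0; apply: hspan_eq0.
Qed.

End HomogeneousSpan.

Section HomogeneousSpanObject.
Variables (Γ : group) (A : gring Γ) (idA : idempotent_ring A).
Variables (M : gmod A) (P : M -> Prop).

Definition hspanb : pred M := fun x => `[< hspan P x >].

Lemma hspanb_zmod_closed : zmod_closed hspanb.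
Proof.
split; first exact/asboolP/hspan0.
by move=> x y /asboolP hx /asboolP hy; apply/asboolP/hspanD/hspanN.
Qed.

HB.instance Definition _ := GRing.isZmodClosed.Build M hspanb hspanb_zmod_closed.

Record hspan_elt := HSpanElt { hspan_val : M; _ : hspanb hspan_val }.

HB.instance Definition _ := [isSub for hspan_val].
HB.instance Definition _ := [Choice of hspan_elt by <:].
HB.instance Definition _ := [SubChoice_isSubZmodule of hspan_elt by <:].

Lemma hspan_valP (x : hspan_elt) : hspan P (val x).
Proof. exact: asboolW (valP x). Qed.

Definition hspan_elt_act a (x : hspan_elt) : hspan_elt :=
  HSpanElt (asboolT (hspan_act a (hspan_valP x))).

Definition hspan_elt_mpi g (x : hspan_elt) : hspan_elt :=
  HSpanElt (asboolT (hspan_mpi g (hspan_valP x))).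

Lemma hspan_grading : grading hspan_elt_mpi.
Proof.
split=> [g x y|g x|g h x gh|x]; try apply: val_inj.
- by rewrite raddfD /= mpiD.
- exact: mpi_id.
- exact: mpi_orth.
- by have [s sE] := mpi_decomp (val x); exists s; apply: val_inj; rewrite raddf_sum.
Qed.

Lemma hspan_unital x : hspan P x ->
  exists s : seq (A * hspan_elt), x = \sum_(p <- s) act p.1 (val p.2).
Proof.
elim=> [|u v _ [s ->] _ [t ->]|a m k Pm mk]; first by exists [::]; rewrite big_nil.
  by exists (s ++ t); rewrite big_cat.
have [t ->] := idA a.
exists [seq (p.1, HSpanElt (asboolT (hspan_gen p.2 Pm mk))) | p <- t].
by rewrite big_map act_suml; apply: eq_bigr => p _; rewrite actA.
Qed.

Definition hspan_gmod : gmod A.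
Proof.
refine (@GMod Γ A hspan_elt hspan_elt_act hspan_elt_mpi _ _ _ hspan_grading _ _ _).
- by move=> a b x; apply: val_inj; rewrite raddfD /= actDl.
- by move=> a x y; apply: val_inj; rewrite raddfD /= raddfD.
- by move=> a b x; apply: val_inj; rewrite /= actA.
- by move=> g h a x; apply: val_inj; rewrite /= act_hom.
- move=> x; have [s sE] := hspan_unital (hspan_valP x).
  by exists s; apply: val_inj; rewrite raddf_sum.
- move=> x x0; apply: val_inj; rewrite raddf0; apply: mtorsionfree => a.
  by have /= := congr1 val (x0 a).
Defined.

Definition hspan_incl : ghom hspan_gmod M :=
  @GHom Γ A hspan_gmod M val (fun _ _ => erefl) (fun _ _ => erefl) (fun _ _ => erefl).

Lemma hspan_incl_inj : injective hspan_incl.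
Proof. exact: val_inj. Qed.

Lemma im_hspan_incl : im hspan_incl = hspan P.
Proof.
apply/funext => y; apply/propext; split; first by case=> x <-; apply: hspan_valP.
by move=> Py; exists (HSpanElt (asboolT Py)).
Qed.

End HomogeneousSpanObject.

Arguments hspan_incl_inj {Γ A} idA {M} P.

Section AdditiveFunctor.
Variables (Γ : group) (A B : gring Γ) (F : gfunctor A B).

Lemma fhom_zero M N (f : ghom M N) : f =1 (fun=> 0) -> fhom F f =1 (fun=> 0).
Proof.
move=> f0 y; have ff : hplus f f = f by apply: ghom_ext => x /=; rewrite f0 addr0.
have /= := congr1 (fun h => hfun h y) (fhom_add F f f); rewrite ff.
by move/esym/eqP; rewrite -subr_eq0 addrK => /eqP.
Qed.

Lemma fhom_im_le X Y M (f : ghom X M) (g : ghom Y M) :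
  injective g -> im_le f g -> im_le (fhom F f) (fhom F g).
Proof.
move=> g_inj /(factor_through g_inj) [k ->] _ [x <-].
by rewrite fhom_comp; exists (fhom F k x).
Qed.

End AdditiveFunctor.

Section NaturalIso.
Variables (Γ : group) (A B : gring Γ) (F : gfunctor A B) (G : gfunctor B A).
Hypothesis GF : comp_iso_id F G.

Lemma comp_iso_id_pointwise : exists eta : forall M, ghom (G (F M)) M,
  [/\ forall M, injective (eta M), forall M y, exists x, eta M x = y &
      forall M N (f : ghom M N) x, eta N (fhom G (fhom F f) x) = f (eta M x)].
Proof.
case: GF => eta [eta_iso eta_nat]; exists eta; split.
- move=> M x y; case: (eta_iso M) => e [eK _] exy.
  by rewrite -[x]/(hid _ x) -[y]/(hid _ y) -eK /= exy.
- move=> M y; case: (eta_iso M) => e [_ Ke].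
  by exists (e y); rewrite -[RHS]/(hid _ y) -Ke.
- by move=> M N f x; have /= := congr1 (fun h => hfun h x) (eta_nat M N f).
Qed.

Lemma fhom_eq0 M N (f : ghom M N) : fhom F f =1 (fun=> 0) -> f =1 (fun=> 0).
Proof.
have [eta [_ eta_surj eta_nat]] := comp_iso_id_pointwise.
move=> Ff0 x; have [z <-] := eta_surj M x.
by rewrite -eta_nat (fhom_zero Ff0) raddf0.
Qed.

Lemma im_le_fhom2 X Y M (f : ghom X M) (g : ghom Y M) :
  im_le (fhom G (fhom F f)) (fhom G (fhom F g)) -> im_le f g.
Proof.
have [eta [_ eta_surj eta_nat]] := comp_iso_id_pointwise.
move=> fg _ [x <-]; have [z <-] := eta_surj X x.
have [w GFgw] := fg _ (ex_intro _ z erefl).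
by exists (eta Y w); rewrite -!eta_nat GFgw.
Qed.

Lemma fhom2_inj M N (f : ghom M N) : injective f -> injective (fhom G (fhom F f)).
Proof.
have [eta [eta_inj _ eta_nat]] := comp_iso_id_pointwise.
by move=> f_inj u v /(congr1 (eta N)); rewrite !eta_nat => /f_inj /eta_inj.
Qed.

End NaturalIso.

Section MonoPreservation.
Variables (Γ : group) (A B : gring Γ) (F : gfunctor A B) (G : gfunctor B A).
Hypotheses (GF : comp_iso_id F G) (FG : comp_iso_id G F) (idB : idempotent_ring B).

Lemma fhom_inj X Y (f : ghom X Y) : injective f -> injective (fhom F f).
Proof.
move=> f_inj u v Fuv; apply/eqP; rewrite -subr_eq0; apply/eqP.
pose K z := fhom F f z = 0.
have K_submod : gr_submod K := ker_submod (fhom F f).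
have Kuv : K (u - v) by rewrite /K raddfB /= Fuv subrr.
apply: contrapT => uv0.
have [y [Ky y0]] := hspan_nonzero K_submod Kuv uv0.
pose j := hspan_incl idB K.
have Ffj0 : hcomp (fhom F f) j =1 (fun=> 0).
  by move=> x; apply: (hspan_sub K_submod); apply: hspan_valP.
have Gj0 : fhom G j =1 (fun=> 0).
  move=> z; apply: (fhom2_inj GF f_inj); rewrite raddf0.
  by have /= := fhom_zero (F := G) Ffj0 z; rewrite fhom_comp.
have [x xE] : im j y by rewrite im_hspan_incl.
by apply: y0; rewrite -xE (fhom_eq0 FG Gj0).
Qed.

End MonoPreservation.

Section Equivalence.
Variables (Γ : group) (A B : gring Γ) (F : gfunctor A B) (G : gfunctor B A).
Hypotheses (GF : comp_iso_id F G) (FG : comp_iso_id G F).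
Hypotheses (idA : idempotent_ring A) (idB : idempotent_ring B).

Let F_inj := fhom_inj GF FG idB.
Let G_inj := fhom_inj FG GF idA.

Lemma im_le_fhomE X Y M (f : ghom X M) (g : ghom Y M) :
  injective g -> im_le (fhom F f) (fhom F g) <-> im_le f g.
Proof.
move=> g_inj; split; last exact: fhom_im_le.
by move=> /(fhom_im_le (F := G) (F_inj g_inj)); apply: im_le_fhom2.
Qed.

Lemma fhom_subobject S Q (g : ghom Q (F S)) : injective g ->
  exists X (f : ghom X S), injective f /\ im (fhom F f) = im g.
Proof.
move=> g_inj; have [eta [eta_inj eta_surj eta_nat]] := comp_iso_id_pointwise GF.
pose f := hcomp (eta S) (fhom G g).
have f_inj : injective f by move=> u v /eta_inj /(G_inj g_inj).
have GFfE u : fhom G (fhom F f) u = fhom G g (eta _ u).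
  by apply: eta_inj; rewrite eta_nat.
exists (G Q), f; split=> //; apply/funext => y; apply/propext; split.
- apply: (im_le_fhom2 FG); apply: (fhom_im_le (F := F) (G_inj g_inj)) => _ [u <-].
  by exists (eta _ u); rewrite GFfE.
- apply: (im_le_fhom2 FG); apply: (fhom_im_le (F := F) (G_inj (F_inj f_inj))) => _ [w <-].
  by have [u <-] := eta_surj _ w; exists u; rewrite GFfE.
Qed.

Lemma fhom_gr_simple S X (i : ghom X S) :
  injective i -> gr_simple_sub (im i) -> gr_simple_sub (im (fhom F i)).
Proof.
move=> i_inj [[_ [[x <-] ix0]] i_max]; split.
  apply: contrapT => /forallNP Fi0; apply/ix0/(fhom_eq0 GF) => y.
  by apply: contrapT => Fiy0; apply: (Fi0 (fhom F i y)); split=> //; exists y.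
move=> P P_submod P_le.
have [P0|/existsNP [p /not_implyP [Pp p0]]] := pselect (forall y, P y -> y = 0).
  by left.
right; pose g := hspan_incl idB P.
have g_le_P y : im g y -> P y by rewrite im_hspan_incl; apply: hspan_sub.
have [Y [f [f_inj Ff_g]]] := fhom_subobject (hspan_incl_inj idB P).
have f_le_i : im_le f i.
  by apply/(im_le_fhomE f i_inj) => y; rewrite Ff_g => /g_le_P /P_le.
case: (i_max _ (im_submod f) f_le_i) => [f0|i_le_f].
  have [z [hz z0]] := hspan_nonzero P_submod Pp p0.
  have [w wE] : im (fhom F f) z by rewrite Ff_g im_hspan_incl.
  by case: z0; rewrite -wE (fhom_zero (fun x => f0 _ (ex_intro _ x erefl))).
by move=> y /(fhom_im_le (F := F) f_inj i_le_f); rewrite Ff_g => /g_le_P.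
Qed.

Lemma gr_simple_fobj S : gr_simple S -> gr_simple (F S).
Proof.
rewrite /gr_simple -(im_hid S) -(im_hid (F S)) -fhom_id.
by apply: fhom_gr_simple => x y.
Qed.

Section Semisimple.
Variables (S : gmod A) (I : Type) (N : I -> S -> Prop).
Hypothesis N_simple : forall i, gr_submod (N i) /\ gr_simple_sub (N i).
Hypothesis N_span : forall x, sum_submods N x.
Hypothesis N_indep :
  forall i x, N i x -> sum_submods (fun j z => j <> i /\ N j z) x -> x = 0.

Let incl i := hspan_incl idA (N i).
Let incl_inj i : injective (incl i) := hspan_incl_inj idA (N i).

Let im_incl i : im (incl i) = N i.
Proof. by rewrite im_hspan_incl; case: (N_simple i) => ? ?; apply: hspan_simple. Qed.

Let N' i := im (fhom F (incl i)).

Lemma fobj_summand_simple i : gr_submod (N' i) /\ gr_simple_sub (N' i).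
Proof.
split; first exact: im_submod.
apply: fhom_gr_simple; first exact: incl_inj.
by rewrite im_incl; case: (N_simple i).
Qed.

Lemma fobj_summands_span y : sum_submods N' y.
Proof.
pose T := sum_submods N'.
have T_submod : gr_submod T.
  by apply: sum_submods_submod => i _ _; apply: im_submod.
have [X [f [f_inj Ff_g]]] := fhom_subobject (hspan_incl_inj idB T).
have incl_le_f i : im_le (incl i) f.
  apply/(im_le_fhomE _ f_inj) => z Fz; rewrite Ff_g im_hspan_incl.
  by apply: (im_sub_hspan T_submod _ Fz) => w; apply: (sum_submods_in (i := i)).
have f_full : im_le (hid S) f.
  move=> x _; apply: (sum_submods_min (im_submod f) _ (N_span x)) => i z Nz.
  by apply: (incl_le_f i); rewrite im_incl.
have : im (hspan_incl idB T) y.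
  by rewrite -Ff_g; apply: (fhom_im_le f_inj f_full); rewrite fhom_id; exists y.
by rewrite im_hspan_incl; apply: hspan_sub.
Qed.

Lemma fobj_summands_indep i y :
  N' i y -> sum_submods (fun j z => j <> i /\ N' j z) y -> y = 0.
Proof.
move=> N'y N'y_rest.
pose W := sum_submods (fun j z => j <> i /\ N j z).
have W_submod : gr_submod W.
  apply: sum_submods_submod => j _ [ji _]; apply: gr_submodI (N_simple j).1.
  by split=> *.
pose h := hspan_incl idA W.
have h_inj : injective h := hspan_incl_inj idA W.
have incl_le_h j : j <> i -> im_le (incl j) h.
  move=> ji z iz; rewrite /h im_hspan_incl; apply: (im_sub_hspan W_submod _ iz) => w.
  by rewrite im_incl => Nw; apply: (sum_submods_in (i := j)).
have N'y_h : im (fhom F h) y.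
  apply: (sum_submods_min (im_submod _) _ N'y_rest) => j z [ji].
  exact: fhom_im_le h_inj (incl_le_h j ji) z.
pose Q z := N' i z /\ im (fhom F h) z.
have Q_submod : gr_submod Q by apply: gr_submodI; apply: im_submod.
case: (fobj_summand_simple i) => _ [_ /(_ Q Q_submod (fun z => @proj1 _ _))].
case=> [Q0|N'_le_Q]; first exact: Q0 (conj N'y N'y_h).
have incl_le_h_i : im_le (incl i) h.
  by apply/(im_le_fhomE _ h_inj) => z /N'_le_Q [].
have [[x [Nx x0]] _] := (N_simple i).2.
case: x0; apply: (N_indep Nx); apply: (hspan_sub W_submod).
by rewrite -im_hspan_incl; apply: incl_le_h_i; rewrite im_incl.
Qed.

End Semisimple.

Lemma gr_semisimple_fobj S : gr_semisimple S -> gr_semisimple (F S).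
Proof.
case=> I [N [N_simple [N_span N_indep]]].
exists I, (fun i => im (fhom F (hspan_incl idA (N i)))); split.
  exact: fobj_summand_simple.
split; [exact: fobj_summands_span | exact: fobj_summands_indep].
Qed.

End Equivalence.

Theorem corollary7p2 (Γ : group) (A B : gring Γ)
  (idA : idempotent_ring A) (tfA : torsionfree_ring A)
  (idB : idempotent_ring B) (tfB : torsionfree_ring B)
  (F : gfunctor A B) (G : gfunctor B A)
  (grF : graded_functor F) (grG : graded_functor G)
  (eqFG : inverse_equivalences F G)
  (S : gmod A) :
  (gr_simple S -> gr_simple (F S)) /\ (gr_semisimple S -> gr_semisimple (F S)).
Proof.
case: eqFG => GF FG; split.
- exact: gr_simple_fobj GF FG idA idB S.
- exact: gr_semisimple_fobj GF FG idA idB S.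
Qed.
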